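(* Let $R$ be a commutative ring. Every $w$-projective $w$-module over $R$ is $w$-split.
   Context: $R$ is a commutative ring with identity. For an $R$-module $M$ and $s\in R$, $\eta^M_s:M\to M$ is multiplication by $s$. GV-ideals and torsion: - An ideal $J$ of $R$ is a GV-ideal if $J$ is finitely generated and the natural map $R\to\mathrm{Hom}_R(J,R)$ is an isomorphism. $\mathrm{GV}(R)$ is the set of GV-ideals. - $\mathrm{tor_{GV}}(M)=\{x\in M: Jx=0\text{ for some }J\in\mathrm{GV}(R)\}$. - $M$ is GV-torsion if $\mathrm{tor_{GV}}(M)=M$, and GV-torsionfree if $\mathrm{tor_{GV}}(M)=0$. $w$-modules and $w$-projectivity: - A GV-torsionfree $M$ is a $w$-module if $\mathrm{Ext}^1_R(R/J,M)=0$ for all $J\in\mathrm{GV}(R)$. - For GV-torsionfree $M$, $M_w=\{x\in E(M): Jx\subseteq M\text{ for some }J\in\mathrm{GV}(R)\}$, where $E(M)$ is the injective envelope. - $M$ is $w$-projective if $\mathrm{Ext}^1_R(L(M),N)$ is GV-torsion for every torsionfree $w$-module $N$, where $L(M)=(M/\mathrm{tor_{GV}}(M))_w$. $w$-split: - A short exact sequence $0\to A\xrightarrow{f}B\xrightarrow{g}C\to 0$ is $w$-split if there exist $J=\langle d_1,\dots,d_n\rangle\in\mathrm{GV}(R)$ and $h_1,\dots,h_n\in\mathrm{Hom}_R(C,B)$ with $gh_k=\eta^C_{d_k}$ for all $k$. - $M$ is $w$-split if there is a $w$-split exact sequence $0\to K\to P\to M\to 0$ with $P$ projective. *)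

From HB Require Import structures.
From mathcomp Require Import all_boot all_order all_algebra.
Set Implicit Arguments. Unset Strict Implicit. Unset Printing Implicit Defensive.
Import GRing.Theory.
Local Open Scope ring_scope.

Section WTheory.
Variable R : comPzRingType.

Definition in_ideal (ds : seq R) (x : R) : Prop :=
  exists c : 'I_(size ds) -> R, x = \sum_(i < size ds) c i * ds`_i.

(* J = <ds> is a GV-ideal: J finitely generated (by construction) and the
   natural map R -> Hom_R(J,R), r |-> (x |-> r x), is an isomorphism. *)
Definition GV (ds : seq R) : Prop :=
  (forall r : R, (forall x, in_ideal ds x -> r * x = 0) -> r = 0) /\
  (forall phi : R -> R,
     (forall a x y, in_ideal ds x -> in_ideal ds y ->
        phi (a * x + y) = a * phi x + phi y) ->
     exists r : R, forall x, in_ideal ds x -> phi x = r * x).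

Definition torGV (M : lmodType R) (x : M) : Prop :=
  exists ds, GV ds /\ forall d, in_ideal ds d -> d *: x = 0.

Definition GV_torsionfree (M : lmodType R) : Prop :=
  forall x : M, torGV x -> x = 0.

Definition torsionfree (M : lmodType R) : Prop :=
  forall (r : R) (x : M), (forall s : R, r * s = 0 -> s = 0) -> r *: x = 0 -> x = 0.

Definition ses (A B C : lmodType R) (f : {linear A -> B}) (g : {linear B -> C})
  : Prop :=
  injective f /\ (forall c, exists b, g b = c) /\
  (forall b, g b = 0 <-> exists a, f a = b).

Definition is_R_mod_ideal (ds : seq R) (C : lmodType R) : Prop :=
  exists c : C, (forall x : C, exists r, x = r *: c) /\
                (forall r : R, r *: c = 0 <-> in_ideal ds r).

(* Yoneda Ext^1_R(C, N) = 0 : every extension of N by C splits *)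
Definition Ext1_zero (C N : lmodType R) : Prop :=
  forall (E : lmodType R) (f : {linear N -> E}) (g : {linear E -> C}),
    ses f g -> exists h : {linear C -> E}, forall x, g (h x) = x.

(* Yoneda Ext^1_R(C, N) is GV-torsion: for every extension class xi there is
   a GV-ideal J with d.xi = 0 for all d in J, where d.xi is the pullback of xi
   along eta^C_d; this pullback splits iff eta^C_d lifts through g. *)
Definition Ext1_GVtorsion (C N : lmodType R) : Prop :=
  forall (E : lmodType R) (f : {linear N -> E}) (g : {linear E -> C}),
    ses f g -> exists ds, GV ds /\
      forall d, in_ideal ds d ->
        exists h : {linear C -> E}, forall x, g (h x) = d *: x.

Definition w_module (M : lmodType R) : Prop :=
  GV_torsionfree M /\
  forall ds, GV ds -> forall C : lmodType R, is_R_mod_ideal ds C -> Ext1_zero C M.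

Definition injective_module (E : lmodType R) : Prop :=
  forall (A B : lmodType R) (m : {linear A -> B}) (f : {linear A -> E}),
    injective m -> exists g : {linear B -> E}, forall a, g (m a) = f a.

Definition submodule (E : lmodType R) (S : E -> Prop) : Prop :=
  S 0 /\ (forall x y, S x -> S y -> S (x + y)) /\
  (forall (r : R) x, S x -> S (r *: x)).

Definition essential (Q E : lmodType R) (i : {linear Q -> E}) : Prop :=
  forall S : E -> Prop, submodule S -> (exists y, S y /\ y <> 0) ->
    exists x : Q, S (i x) /\ i x <> 0.

(* L is (isomorphic to) L(M) = (M / tor_GV(M))_w : Q = M/tor_GV(M) via q,
   i : Q -> E an injective envelope, and j identifies L with
   Q_w = {y in E | J y \subseteq Q for some GV-ideal J}. *)
Definition is_L (M L : lmodType R) : Prop :=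
  exists (Q E : lmodType R) (q : {linear M -> Q}) (i : {linear Q -> E})
         (j : {linear L -> E}),
    (forall z, exists x, q x = z) /\ (forall x, q x = 0 <-> torGV x) /\
    injective i /\ injective_module E /\ essential i /\
    injective j /\
    (forall y : E, (exists z, j z = y) <->
       exists ds, GV ds /\ forall d, in_ideal ds d -> exists x, i x = d *: y).

Definition w_projective (M : lmodType R) : Prop :=
  forall L : lmodType R, is_L M L ->
  forall N : lmodType R, torsionfree N -> w_module N -> Ext1_GVtorsion L N.

Definition projective_module (P : lmodType R) : Prop :=
  forall (B C : lmodType R) (g : {linear B -> C}) (f : {linear P -> C}),
    (forall c, exists b, g b = c) ->
    exists h : {linear P -> B}, forall x, g (h x) = f x.

Definition w_split_ses (A B C : lmodType R) (f : {linear A -> B})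
  (g : {linear B -> C}) : Prop :=
  ses f g /\ exists ds, GV ds /\
    forall d, d \in ds -> exists h : {linear C -> B}, forall x, g (h x) = d *: x.

Definition w_split (M : lmodType R) : Prop :=
  exists (K P : lmodType R) (f : {linear K -> P}) (g : {linear P -> M}),
    projective_module P /\ w_split_ses f g.

End WTheory.

(* Let [F] be the free module on the underlying set of [M] and [K] the kernel of the
   cover [F -> M]. A module is a w-module iff it is GV-torsionfree and satisfies Baer's
   criterion for GV-ideals [J]: every linear map [J -> N] is multiplication by an
   element of [N]. For [K] this holds coordinatewise in [F], because [R -> Hom(J, R)] is
   onto, and the resulting element of [F] lies in [K] because [M] is GV-torsionfree.
   As [M] is a w-module, [M_w = M] inside an injective envelope of [M], so [L(M) = M]
   and w-projectivity makes the extension [0 -> K -> F -> M -> 0] GV-torsion in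
   [Ext^1(M, K)], which is w-splitness. Injective envelopes are maximal essential
   extensions inside a product of copies of [Hom_Z(R, Q/Z)]. *)

From HB Require Import structures.
From mathcomp Require Import all_boot all_order all_algebra.
From mathcomp Require Import boolp classical_sets.
From mathcomp Require Import finmap monalg.
Set Implicit Arguments. Unset Strict Implicit. Unset Printing Implicit Defensive.
Import Order.TTheory GRing.Theory Num.Theory.
Local Open Scope ring_scope.
Local Open Scope quotient_scope.
Local Open Scope classical_set_scope.

Definition lin_of (R : comPzRingType) (U V : lmodType R) (f : U -> V)
    (fP : forall a x y, f (a *: x + y) = a *: f x + f y) : {linear U -> V} :=
  HB.pack f (GRing.isLinear.Build R U V *:%R f fP).

Section Zorn.
Variable T : Type.

Lemma chain_bigcup2 (F : set (set T)) x y : total_on F subset ->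
  (\bigcup_(X in F) X) x -> (\bigcup_(X in F) X) y -> exists2 X, F X & X x /\ X y.
Proof.
move=> Ftot [X FX Xx] [Y FY Yy].
by case: (Ftot X Y FX FY) => sub; [exists Y => //; split; first exact: sub
                                  | exists X => //; split; last exact: sub].
Qed.

Variable P : set (set T).
Hypothesis P_chain : forall F : set (set T),
  F `<=` P -> total_on F subset -> F !=set0 -> P (\bigcup_(X in F) X).

Lemma zorn_above (X0 : set T) : P X0 ->
  exists2 S, P S /\ X0 `<=` S & forall X, P X -> S `<=` X -> X = S.
Proof.
move=> PX0; pose Q := fun X => X = set0 \/ (P X /\ X0 `<=` X).
have [S [QS Smax]] : exists S, Q S /\ forall X, S `<` X -> ~ Q X.
  apply: Zorn_bigcup => F FQ Ftot.
  pose G := F `&` (fun X => P X /\ X0 `<=` X).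
  have FG : \bigcup_(X in F) X = \bigcup_(X in G) X.
    apply/seteqP; split => [p [X FX Xp]|p [X [FX _] Xp]]; last by exists X.
    exists X => //; split => //; case: (FQ X FX) => [X0e|//].
    by rewrite X0e in Xp.
  have [[X [FX [PX sX]]]|noG] := pselect (G !=set0).
    right; rewrite FG; split.
      apply: P_chain; first by move=> Y [_ []].
        by move=> Y Z [FY _] [FZ _]; apply: Ftot.
      by exists X.
    by move=> p /sX Xp; exists X.
  left; rewrite FG; apply/seteqP; split => // p [X GX _]; apply: noG; by exists X.
have maxQ X : Q X -> S `<=` X -> X = S.
  move=> QX SX; apply/seteqP; split => //.
  by apply: contrapT => XS; exact: Smax X (conj SX XS) QX.
have [PS sS] : P S /\ X0 `<=` S.
  move: QS; rewrite /Q /= => -[S0|//].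
  have QX0 : Q X0 by right; split.
  by have := maxQ X0 QX0; rewrite S0 => /(_ (@sub0set _ _)) <-; split.
by exists S => // X PX SX; apply: maxQ => //; right; split => //; apply: subset_trans SX.
Qed.

End Zorn.

(** * Submodules and quotient modules *)

Section SubmoduleQuotient.
Variables (R : comPzRingType) (V : lmodType R).

Lemma bigcup_submodule (F : set (set V)) : total_on F subset -> F !=set0 ->
  (forall X, F X -> submodule X) -> submodule (\bigcup_(X in F) X).
Proof.
move=> Ftot [X0 FX0] Fsub; split; first by exists X0 => //; case: (Fsub X0 FX0).
split=> [x y xF yF|r x [X FX Xx]]; last by exists X => //; case: (Fsub X FX) => _ [_]; apply.
have [X FX [Xx Xy]] := chain_bigcup2 Ftot xF yF.
by exists X => //; case: (Fsub X FX) => _ [+ _]; apply.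
Qed.

Lemma range_submodule (U : lmodType R) (f : {linear U -> V}) : submodule (range f).
Proof.
split; first by exists 0; rewrite ?linear0.
split=> [_ _ [x _ <-] [y _ <-]|r _ [x _ <-]]; first by exists (x + y); rewrite ?linearD.
by exists (r *: x); rewrite ?linearZ.
Qed.

Lemma kernel_submodule (U : lmodType R) (f : {linear V -> U}) :
  submodule (fun x => f x = 0).
Proof.
split; first exact: linear0.
by split=> [x y fx fy|r x fx]; rewrite ?linearD ?linearZ /= ?fx ?fy ?addr0 ?scaler0.
Qed.

Variables (S : set V) (HS : submodule S).

Definition submod_pred of submodule S : {pred V} := fun x => `[< S x >].

Lemma submod_predP x : reflect (S x) (x \in submod_pred HS).
Proof. exact: asboolP. Qed.

Lemma submod_pred_closed : submod_closed (submod_pred HS).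
Proof.
case: HS => S0 [SD SZ]; split=> [|a u v /submod_predP Su /submod_predP Sv].
  exact/submod_predP.
by apply/submod_predP/SD => //; apply: SZ.
Qed.

HB.instance Definition _ :=
  GRing.isSubmodClosed.Build R V (submod_pred HS) submod_pred_closed.

Definition subm := {x : V | x \in submod_pred HS}.
HB.instance Definition _ := [isSub for (@sval _ _ : subm -> V)].
HB.instance Definition _ := [Choice of subm by <:].
HB.instance Definition _ := [SubChoice_isSubLmodule of subm by <:].

Definition subm_of x (Sx : S x) : subm := exist _ x (introT (submod_predP x) Sx).

Lemma subm_valP (z : subm) : S (val z).
Proof. exact/submod_predP/valP. Qed.

Definition quotm := Quotient.quot (submod_pred HS).
HB.instance Definition _ := GRing.Zmodule.on quotm.

Lemma quotm_eqP x y : \pi_quotm x = \pi y <-> S (x - y).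
Proof.
rewrite (rwP eqP) -Quotient.idealrBE.
by split=> [/submod_predP|/submod_predP].
Qed.

Definition quotm_scale (a : R) (x : quotm) : quotm := \pi_quotm (a *: repr x).

Lemma pi_quotm_scale a x : quotm_scale a (\pi x) = \pi_quotm (a *: x).
Proof.
apply/quotm_eqP; rewrite -scalerBr; apply/submod_predP/rpredZ/submod_predP.
by apply/quotm_eqP; rewrite reprK.
Qed.

Lemma quotm_scaleA a b x : quotm_scale a (quotm_scale b x) = quotm_scale (a * b) x.
Proof. by elim/quotW: x => x; rewrite !pi_quotm_scale scalerA. Qed.

Lemma quotm_scale1 : left_id 1 quotm_scale.
Proof. by elim/quotW => x; rewrite pi_quotm_scale scale1r. Qed.

Lemma quotm_scaleDr : right_distributive quotm_scale +%R.
Proof.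
move=> a; elim/quotW => x; elim/quotW => y.
by rewrite -raddfD !pi_quotm_scale scalerDr raddfD.
Qed.

Lemma quotm_scaleDl x : {morph quotm_scale^~ x : a b / a + b}.
Proof. by elim/quotW: x => x a b; rewrite !pi_quotm_scale scalerDl raddfD. Qed.

HB.instance Definition _ := GRing.Zmodule_isLmodule.Build R quotm
  quotm_scaleA quotm_scale1 quotm_scaleDr quotm_scaleDl.

Definition quotm_pi (x : V) : quotm := \pi_quotm x.

Lemma quotm_pi_is_additive : zmod_morphism quotm_pi.
Proof. exact: raddfB. Qed.

Lemma quotm_pi_is_scalable : scalable quotm_pi.
Proof. by move=> a x; rewrite /quotm_pi -pi_quotm_scale. Qed.

HB.instance Definition _ :=
  GRing.isZmodMorphism.Build V quotm quotm_pi quotm_pi_is_additive.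
HB.instance Definition _ :=
  GRing.isScalable.Build R V quotm *:%R quotm_pi quotm_pi_is_scalable.

Lemma quotm_piP x y : quotm_pi x = quotm_pi y <-> S (x - y).
Proof. exact: quotm_eqP. Qed.

Lemma quotm_pi_eq0 x : quotm_pi x = 0 <-> S x.
Proof. by rewrite -(raddf0 quotm_pi) quotm_piP subr0. Qed.

Lemma quotm_pi_surj (z : quotm) : exists x, quotm_pi x = z.
Proof. by exists (repr z); rewrite /quotm_pi reprK. Qed.

Section QuotmLift.
Variables (U : lmodType R) (h : {linear V -> U}) (h_S : forall x, S x -> h x = 0).

Definition quotm_lift_fun (z : quotm) : U := h (repr z).

Lemma quotm_lift_funE x : quotm_lift_fun (quotm_pi x) = h x.
Proof.
apply/eqP; rewrite -subr_eq0 -linearB; apply/eqP/h_S/quotm_piP.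
by rewrite /quotm_pi reprK.
Qed.

Lemma quotm_lift_fun_linear a z z' :
  quotm_lift_fun (a *: z + z') = a *: quotm_lift_fun z + quotm_lift_fun z'.
Proof.
have [x <-] := quotm_pi_surj z; have [y <-] := quotm_pi_surj z'.
by rewrite -linearP !quotm_lift_funE linearP.
Qed.

Definition quotm_lift : {linear quotm -> U} := lin_of quotm_lift_fun_linear.

Lemma quotm_liftE x : quotm_lift (quotm_pi x) = h x.
Proof. exact: quotm_lift_funE. Qed.

End QuotmLift.

End SubmoduleQuotient.

(** * Q/Z is an injective cogenerator of abelian groups *)

Section Subgroups.
Variable V : zmodType.

Definition subgroup (P : set V) := P 0 /\ forall x y, P x -> P y -> P (x - y).

Variables (P : set V) (sP : subgroup P).

Lemma subgroup0 : P 0.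
Proof. by case: sP. Qed.

Lemma subgroupB x y : P x -> P y -> P (x - y).
Proof. by case: sP => _; apply. Qed.

Lemma subgroupN x : P x -> P (- x).
Proof. by move=> Px; rewrite -sub0r; apply/subgroupB/Px/subgroup0. Qed.

Lemma subgroupD x y : P x -> P y -> P (x + y).
Proof. by move=> Px Py; rewrite -[y]opprK; apply/subgroupB/subgroupN. Qed.

Lemma subgroupMz x n : P x -> P (x *~ n).
Proof.
move=> Px; have Pnat (k : nat) : P (x *~ k).
  elim: k => [|k IHk]; first by rewrite mulr0z; apply: subgroup0.
  by rewrite -addn1 PoszD mulrzDr mulr1z; apply: subgroupD.
by case: n => k; rewrite ?NegzE ?mulrNz; [apply: Pnat | apply/subgroupN/Pnat].
Qed.

End Subgroups.

Lemma int_subgroup_dvd (P : set int) : subgroup P ->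
  exists d : nat, forall n, P n <-> (d %| n)%Z.
Proof.
move=> sP; have Pdvd d n : P d -> (d %| n)%Z -> P n.
  by move=> Pd /dvdzP[q ->]; rewrite mulrC -mulrzz; apply: subgroupMz.
have [P0|/existsNP[n /not_implyP[Pn /eqP n0]]] := pselect (forall n, P n -> n = 0).
  by exists 0%N => n; rewrite dvd0z; split=> [/P0 ->|/eqP ->] //; apply: subgroup0 sP.
have ex_pos : exists k : nat, (0 < k)%N && `[< P k >].
  exists `|n|%N; rewrite absz_gt0 n0; apply/asboolP.
  by case: (ltrP n 0) => [/ltz0_abs|/gez0_abs] ->; first exact: subgroupN.
case: (ex_minnP ex_pos) => d /andP[d_gt0 /asboolP Pd] d_min.
exists d => m; split=> [Pm|]; last exact: Pdvd.
have d_neq0 : d%:Z != 0 by rewrite eqz_nat -lt0n.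
have r_ge0 := modz_ge0 m d_neq0.
have r_lt : (m %% d)%Z < d by apply: ltz_pmod; rewrite ltz_nat.
have Pr : P (m %% d)%Z.
  have := subgroupB sP Pm (Pdvd _ ((m %/ d)%Z * d) Pd (dvdz_mull _ (dvdzz _))).
  by rewrite {1}(divz_eq m d) addrC addKr.
have r_nat : (m %% d)%Z = `|(m %% d)%Z|%N by rewrite gez0_abs.
move: r_lt Pr; rewrite r_nat ltz_nat => r_lt Pr.
apply/dvdz_mod0P; rewrite r_nat; apply/eqP; rewrite eqz_nat; apply: contraTT r_lt.
by rewrite -lt0n -leqNgt => r_gt0; apply: d_min; rewrite r_gt0; apply/asboolP.
Qed.

Lemma pair_mulrz (U V : zmodType) (x : U) (y : V) n : (x, y) *~ n = (x *~ n, y *~ n).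
Proof. by rewrite [LHS]surjective_pairing (raddfMz fst) (raddfMz snd). Qed.

Definition int_rat : {pred rat} := fun x => x \is a Num.int.

Lemma int_rat_zmod_closed : zmod_closed int_rat.
Proof. by split=> [|x y]; rewrite /int_rat ?rpred0 // => Zx Zy; rewrite rpredB. Qed.

HB.instance Definition _ := GRing.isZmodClosed.Build rat int_rat int_rat_zmod_closed.

Definition QZ := Quotient.quot int_rat.
HB.instance Definition _ := GRing.Zmodule.on QZ.

Definition qz (x : rat) : QZ := \pi_QZ x.

Lemma qz_is_additive : zmod_morphism qz.
Proof. exact: raddfB. Qed.

HB.instance Definition _ := GRing.isZmodMorphism.Build rat QZ qz qz_is_additive.

Lemma qz_eq0 x : qz x = 0 <-> x \is a Num.int.
Proof. by rewrite /qz -(raddf0 \pi_QZ) (rwP eqP) -Quotient.idealrBE subr0. Qed.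

Lemma QZ_divisible (u : QZ) (n : int) : n != 0 -> exists y : QZ, y *~ n = u.
Proof.
move=> n_neq0; have [x <-] : exists x, qz x = u by exists (repr u); rewrite /qz reprK.
by exists (qz (x / n%:~R)); rewrite -raddfMz -mulrzr divfK // intr_eq0.
Qed.

Lemma qz_invn_neq0 (n : nat) : (1 < n)%N -> qz n%:R^-1 != 0.
Proof.
move=> n_gt1; apply/negP => /eqP/qz_eq0/intrP[z ez].
have n_gt0 : (0 : rat) < n%:R by rewrite ltr0n (ltn_trans _ n_gt1).
have : (0 : rat) < (z%:~R : rat) < 1 by rewrite -ez invr_gt0 n_gt0 (invf_lt1 n_gt0) ltr1n.
by rewrite ltr0z ltrz1 gtz0_ge1 => /andP[z_ge1]; rewrite ltNge z_ge1.
Qed.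

Lemma qz_invnMn (n : nat) : (0 < n)%N -> qz n%:R^-1 *~ n = 0.
Proof.
move=> n_gt0; rewrite -raddfMz -mulrzr mulVf; first exact/qz_eq0/int_num1.
by rewrite pnatr_eq0 -lt0n.
Qed.

Section QZExtension.
Variable B : zmodType.

Definition hom_graph (G : set (B * QZ)) :=
  subgroup G /\ forall x u v, G (x, u) -> G (x, v) -> u = v.

Lemma hom_graph0 : hom_graph [set 0].
Proof.
split; first by split=> // x y -> ->; rewrite subr0.
by move=> x u v [_ ->] [_ ->].
Qed.

Lemma hom_graph_chain (F : set (set (B * QZ))) : F `<=` hom_graph ->
  total_on F subset -> F !=set0 -> hom_graph (\bigcup_(X in F) X).
Proof.
move=> Fhom Ftot [X0 FX0]; split; first split.
- by exists X0 => //; apply: subgroup0 (proj1 (Fhom X0 FX0)).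
- move=> p q pF qF; have [X FX [Xp Xq]] := chain_bigcup2 Ftot pF qF.
  by exists X => //; exact: (subgroupB (proj1 (Fhom X FX)) Xp Xq).
- move=> x u v xuF xvF; have [X FX [Xu Xv]] := chain_bigcup2 Ftot xuF xvF.
  exact: (proj2 (Fhom X FX)) _ _ _ Xu Xv.
Qed.

Definition adjoin (A : set (B * QZ)) (v : B * QZ) : set (B * QZ) :=
  fun p => exists n, exists2 q, A q & p = q + v *~ n.

Lemma adjoin_sub A v : A `<=` adjoin A v.
Proof. by move=> p Ap; exists 0, p => //; rewrite mulr0z addr0. Qed.

Lemma adjoin_mem A v : subgroup A -> adjoin A v v.
Proof. by move=> sA; exists 1, 0; [apply: subgroup0 | rewrite add0r mulr1z]. Qed.

Lemma adjoin_hom_graph A b y : hom_graph A ->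
  (forall n u, A (b *~ n, u) -> u = y *~ n) -> hom_graph (adjoin A (b, y)).
Proof.
move=> [sA fA] Ay; split; first split.
- by exists 0, 0; [apply: subgroup0 | rewrite mulr0z addr0].
- move=> _ _ [n [q Aq ->]] [n' [q' Aq' ->]]; exists (n - n'), (q - q').
    exact: subgroupB.
  by rewrite mulrzBr opprD addrACA.
move=> x u u' [n [[a c] Aac]] + [n' [[a' c'] Aac']].
rewrite !pair_mulrz => -[ex ->] [ex' ->].
have e : a - a' = b *~ (n' - n).
  by rewrite mulrzBr -[a](addrK (b *~ n)) -ex ex' addrAC [a' + _]addrC addrK.
have : A (a - a', c - c') := subgroupB sA Aac Aac'.
rewrite e => /Ay; rewrite mulrzBr => /esym.
by move/(congr1 (fun t => t + c' + y *~ n)); rewrite subrK addrAC subrK addrC.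
Qed.

Lemma hom_graph_adjoinable A b : hom_graph A ->
  exists y, forall n u, A (b *~ n, u) -> u = y *~ n.
Proof.
move=> [sA fA]; pose D n := exists u, A (b *~ n, u).
have sD : subgroup D.
  split; first by exists 0; rewrite mulr0z; apply: subgroup0 sA.
  move=> m n [u Au] [v Av]; exists (u - v); rewrite mulrzBr.
  exact: subgroupB sA _ _ Au Av.
have [d Dd] := int_subgroup_dvd sD.
have [u0 Au0] : D d by apply/Dd.
have [y yd] : exists y : QZ, y *~ d = u0.
  have [d0|d_neq0] := eqVneq d%:Z 0; last exact: QZ_divisible.
  exists 0; rewrite mul0rz; apply: fA (subgroup0 sA) _.
  by rewrite d0 mulr0z in Au0.
exists y => n u Au; have /dvdzP[q en] : (d %| n)%Z by apply/Dd; exists u.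
have := subgroupMz sA q Au0; rewrite pair_mulrz mulrzA_C -en => Aq.
by rewrite (fA _ _ _ Au Aq) -yd mulrzA_C -en.
Qed.

Lemma hom_graph_extend G : hom_graph G ->
  exists2 H : B -> QZ, {morph H : x y / x + y} & forall x u, G (x, u) -> H x = u.
Proof.
move=> hG; have [A [[sA fA] GA] Amax] := zorn_above hom_graph_chain hG.
have Atot b : exists u, A (b, u).
  have [y Ay] := hom_graph_adjoinable b (conj sA fA).
  have := Amax _ (adjoin_hom_graph (conj sA fA) Ay) (@adjoin_sub A (b, y)).
  by move=> Aeq; exists y; rewrite -Aeq; apply: adjoin_mem.
have [H HA] := choice Atot.
exists H => [x y|x u /GA]; last exact: fA (HA x).
exact: fA (HA _) (subgroupD sA (HA x) (HA y)).
Qed.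

Lemma QZ_separates (b : B) : b != 0 ->
  exists2 H : B -> QZ, {morph H : x y / x + y} & H b != 0.
Proof.
move=> b_neq0; pose D n := b *~ n = 0.
have sD : subgroup D.
  by split=> [|m n]; rewrite /D ?mulr0z // mulrzBr => -> ->; rewrite subrr.
have [d Dd] := int_subgroup_dvd sD.
have [y [y_neq0 yd]] : exists y : QZ, y != 0 /\ y *~ d = 0.
  have [->|d_gt0] := posnP d; first by exists (qz 2^-1); rewrite mulr0z qz_invn_neq0.
  exists (qz d%:R^-1); rewrite qz_invnMn // qz_invn_neq0 // ltn_neqAle d_gt0 andbT.
  apply: contra b_neq0 => /eqP d1; have /Dd : (d%:Z %| d%:Z)%Z := dvdzz _.
  by rewrite /D -d1 mulr1z => ->.
have Ay n u : [set 0] (b *~ n, u) -> u = y *~ n.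
  case=> /Dd /dvdzP[q ->] ->; by rewrite mulrC mulrzA yd mul0rz.
have [H HD HA] := hom_graph_extend (adjoin_hom_graph hom_graph0 Ay).
by exists H; rewrite // (HA b y) //; apply: adjoin_mem; case: hom_graph0.
Qed.

End QZExtension.

(** * Injective envelopes *)

Section Cogenerator.
Variables (R : comPzRingType) (X : Type).

(* The product of [X] copies of the injective cogenerator [Hom_Z(R, Q/Z)], on which
   [R] acts through the argument: [(r f) s = f (s r)]. *)
Definition cogen := {phi : X -> R -> QZ | forall x, {morph phi x : a b / a + b}}.
HB.instance Definition _ := gen_eqMixin cogen.
HB.instance Definition _ := gen_choiceMixin cogen.

Lemma cogenP (f g : cogen) : (forall x s, sval f x s = sval g x s) -> f = g.
Proof.
by case: f g => [f ?] [g ?] /= fg; apply/eq_exist/funext => x; apply/funext => s; apply: fg.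
Qed.

Lemma cogen_zero_subproof (x : X) : {morph (fun _ : R => 0 : QZ) : a b / a + b}.
Proof. by move=> a b; rewrite addr0. Qed.
Definition cogen_zero : cogen := exist _ _ cogen_zero_subproof.

Lemma cogen_add_subproof (f g : cogen) x :
  {morph (fun s => sval f x s + sval g x s) : a b / a + b}.
Proof. by move=> a b; rewrite (svalP f) (svalP g) addrACA. Qed.
Definition cogen_add (f g : cogen) : cogen := exist _ _ (cogen_add_subproof f g).

Lemma cogen_opp_subproof (f : cogen) x : {morph (fun s => - sval f x s) : a b / a + b}.
Proof. by move=> a b; rewrite (svalP f) opprD. Qed.
Definition cogen_opp (f : cogen) : cogen := exist _ _ (cogen_opp_subproof f).

Lemma cogen_addA : associative cogen_add.
Proof. by move=> f g h; apply: cogenP => x s /=; rewrite addrA. Qed.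
Lemma cogen_addC : commutative cogen_add.
Proof. by move=> f g; apply: cogenP => x s /=; rewrite addrC. Qed.
Lemma cogen_add0 : left_id cogen_zero cogen_add.
Proof. by move=> f; apply: cogenP => x s /=; rewrite add0r. Qed.
Lemma cogen_addN : left_inverse cogen_zero cogen_opp cogen_add.
Proof. by move=> f; apply: cogenP => x s /=; rewrite addNr. Qed.

HB.instance Definition _ :=
  GRing.isZmodule.Build cogen cogen_addA cogen_addC cogen_add0 cogen_addN.

Lemma cogen_scale_subproof r (f : cogen) x : {morph (fun s => sval f x (s * r)) : a b / a + b}.
Proof. by move=> a b; rewrite mulrDl (svalP f). Qed.
Definition cogen_scale r (f : cogen) : cogen := exist _ _ (cogen_scale_subproof r f).

Lemma cogen_scaleA a b f : cogen_scale a (cogen_scale b f) = cogen_scale (a * b) f.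
Proof. by apply: cogenP => x s /=; rewrite mulrA. Qed.
Lemma cogen_scale1 : left_id 1 cogen_scale.
Proof. by move=> f; apply: cogenP => x s /=; rewrite mulr1. Qed.
Lemma cogen_scaleDr : right_distributive cogen_scale +%R.
Proof. by move=> a f g; apply: cogenP. Qed.
Lemma cogen_scaleDl f : {morph cogen_scale^~ f : a b / a + b}.
Proof. by move=> a b; apply: cogenP => x s /=; rewrite mulrDr (svalP f). Qed.

HB.instance Definition _ := GRing.Zmodule_isLmodule.Build R cogen
  cogen_scaleA cogen_scale1 cogen_scaleDr cogen_scaleDl.

Section CogenMap.
Variables (B : lmodType R) (H : X -> B -> QZ) (H_add : forall x, {morph H x : a b / a + b}).

Lemma cogen_map_subproof (b : B) x : {morph (fun s : R => H x (s *: b)) : s t / s + t}.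
Proof. by move=> s t; rewrite scalerDl H_add. Qed.
Definition cogen_map_fun (b : B) : cogen := exist _ _ (cogen_map_subproof b).

Lemma cogen_map_fun_linear a b b' :
  cogen_map_fun (a *: b + b') = a *: cogen_map_fun b + cogen_map_fun b'.
Proof. by apply: cogenP => x s /=; rewrite scalerDr H_add scalerA. Qed.

Definition cogen_map : {linear B -> cogen} := lin_of cogen_map_fun_linear.

Lemma cogen_mapE b x s : sval (cogen_map b) x s = H x (s *: b).
Proof. by []. Qed.

End CogenMap.

Lemma cogen_injective : injective_module cogen.
Proof.
move=> A B m f m_inj.
have ext x : exists H : B -> QZ,
    {morph H : a b / a + b} /\ forall a, H (m a) = sval (f a) x 1.
  pose G p := exists a, p = (m a, sval (f a) x 1).
  have hG : hom_graph G.
    split; first split.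
    - by exists 0; rewrite !linear0.
    - by move=> _ _ [a ->] [a' ->]; exists (a - a'); rewrite !linearB.
    - by move=> y u v [a [ea ->]] [a' [ea' ->]]; rewrite (m_inj a a') // -ea -ea'.
  have [H H_add HG] := hom_graph_extend hG.
  by exists H; split => // a; apply: HG; exists a.
have [H /all_and2[H_add Hm]] := choice ext.
exists (cogen_map H_add) => a; apply: cogenP => x s.
by rewrite cogen_mapE -linearZ Hm linearZ /= mul1r.
Qed.

End Cogenerator.

Lemma cogen_embedding (R : comPzRingType) (M : lmodType R) :
  exists i : {linear M -> cogen R M}, injective i.
Proof.
have sep (x : M) : exists H : M -> QZ, {morph H : a b / a + b} /\ (x != 0 -> H x != 0).
  have [->|x_neq0] := eqVneq x 0; first by exists (fun=> 0); split=> // a b; rewrite addr0.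
  by have [H H_add Hx] := QZ_separates x_neq0; exists H.
have [H /all_and2[H_add Hsep]] := choice sep.
exists (cogen_map H_add) => x y ixy; apply/eqP; rewrite -subr_eq0.
apply: contraTT isT => /Hsep; have : cogen_map H_add (x - y) = 0 by rewrite linearB ixy subrr.
by move/(congr1 (fun f => sval f (x - y) 1)); rewrite cogen_mapE scale1r => ->; rewrite eqxx.
Qed.

Section InjectiveEnvelope.
Variables (R : comPzRingType) (E : lmodType R) (E_inj : injective_module E).

Lemma retract_injective (S : set E) (HS : submodule S) (p : {linear E -> E}) :
  (forall x, S (p x)) -> (forall s, S s -> p s = s) -> injective_module (subm HS).
Proof.
move=> pS p_id A B m f m_inj; have [g gE] := E_inj (val \o f) m_inj.
have g'_linear a b b' : subm_of HS (pS (g (a *: b + b'))) =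
    a *: subm_of HS (pS (g b)) + subm_of HS (pS (g b')) :> subm HS.
  by apply: val_inj; rewrite /= !linearP.
exists (lin_of g'_linear) => a; apply: val_inj.
by rewrite /= gE p_id //; apply: subm_valP.
Qed.

Lemma disjoint_projection (S C : set E) : submodule S -> submodule C ->
    (forall z, S z -> C z -> z = 0) ->
  exists p : {linear E -> E}, (forall s, S s -> p s = s) /\ (forall c, C c -> p c = 0).
Proof.
move=> [S0 [SD SZ]] [C0 [CD CZ]] SC0.
have SB s s' : S s -> S s' -> S (s - s').
  by move=> Ss Ss'; apply: SD => //; rewrite -scaleN1r; apply: SZ.
have CB c c' : C c -> C c' -> C (c - c').
  by move=> Cc Cc'; apply: CD => //; rewrite -scaleN1r; apply: CZ.
pose W z := exists s c, [/\ S s, C c & z = s + c].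
have HW : submodule W.
  split; first by exists 0, 0; rewrite addr0.
  split=> [_ _ [s [c [Ss Cc ->]]] [s' [c' [Ss' Cc' ->]]]|a _ [s [c [Ss Cc ->]]]].
    by exists (s + s'), (c + c'); split; [apply: SD | apply: CD | rewrite addrACA].
  by exists (a *: s), (a *: c); split; [apply: SZ | apply: CZ | rewrite scalerDr].
have dec_uniq s c s' c' : S s -> C c -> S s' -> C c' -> s + c = s' + c' -> s = s'.
  move=> Ss Cc Ss' Cc' e; apply/eqP; rewrite -subr_eq0; apply/eqP/SC0; first exact: SB.
  by rewrite -[s](addrK c) e [s' + _]addrC addrAC addrK; apply: CB.
have [pr prP] := choice (fun w : subm HW => subm_valP w).
have prE w s c : S s -> C c -> val w = s + c -> pr w = s.
  by have [c' [Sp Cc' e']] := prP w => Ss Cc e; apply: dec_uniq Sp Cc' Ss Cc _; rewrite -e' e.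
have pr_linear a w w' : pr (a *: w + w') = a *: pr w + pr w'.
  have [c [Sw Cc ew]] := prP w; have [c' [Sw' Cc' ew']] := prP w'.
  apply: (prE _ _ (a *: c + c')); [apply: SD => //; exact: SZ | apply: CD => //; exact: CZ |].
  have -> : val (a *: w + w') = a *: val w + val w' by [].
  by rewrite ew ew' scalerDr addrACA.
have [p pE] := E_inj (lin_of pr_linear) val_inj.
have p_val z (Wz : W z) : p z = pr (subm_of HW Wz) := pE (subm_of HW Wz).
exists p; split=> [s Ss|c Cc].
  have Ws : W s by exists s, 0; rewrite addr0.
  by rewrite (p_val _ Ws) (prE _ s 0) ?addr0.
have Wc : W c by exists 0, c; rewrite add0r.
by rewrite (p_val _ Wc) (prE _ 0 c) ?add0r.
Qed.

Variables (M : lmodType R) (iota : {linear M -> E}).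

Definition essential_over (T : set E) :=
  [/\ submodule T, forall m, T (iota m) &
      forall y, T y -> y != 0 -> exists r m, r *: y = iota m /\ iota m != 0].

Lemma essential_over_chain (F : set (set E)) : F `<=` essential_over ->
  total_on F subset -> F !=set0 -> essential_over (\bigcup_(X in F) X).
Proof.
move=> Fess Ftot [X0 FX0]; split.
- by apply: bigcup_submodule => // [|X /Fess[]]; first by exists X0.
- by move=> m; exists X0 => //; case: (Fess X0 FX0).
- by move=> y [X FX Xy]; case: (Fess X FX) => _ _; apply.
Qed.

Lemma essential_over_range_projection (S C : set E) (p : {linear E -> E}) :
    essential_over S -> submodule C ->
    (forall D, submodule D -> (forall z, D z -> S z -> z = 0) -> C `<=` D -> D = C) ->
    (forall s, S s -> p s = s) -> (forall c, C c -> p c = 0) ->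
  essential_over (range p).
Proof.
move=> [HS Siota Sess] [C0 [CD CZ]] Cmax p_id p0; split.
- exact: range_submodule.
- by move=> m; exists (iota m) => //; rewrite p_id.
move=> _ [x _ <-] px_neq0.
pose D z := exists c r, C c /\ z = c + r *: x.
have HD : submodule D.
  split; first by exists 0, 0; rewrite scale0r addr0.
  split=> [_ _ [c [r [Cc ->]]] [c' [r' [Cc' ->]]]|a _ [c [r [Cc ->]]]].
    by exists (c + c'), (r + r'); split; [apply: CD | rewrite scalerDl addrACA].
  by exists (a *: c), (a * r); split; [apply: CZ | rewrite scalerDr scalerA].
have [z [Dz Sz z_neq0]] : exists z, [/\ D z, S z & z != 0].
  apply: contrapT => noz; have DC : D = C.
    apply: Cmax => // [z Dz Sz|c Cc]; last by exists c, 0; rewrite scale0r addr0.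
    by apply/eqP/negPn/negP => z_neq0; apply: noz; exists z; split.
  have : D x by exists 0, 1; rewrite add0r scale1r.
  by rewrite DC => /p0 px0; rewrite px0 eqxx in px_neq0.
have [c [r [Cc ez]]] := Dz; have [r' [m [e m_neq0]]] := Sess z Sz z_neq0.
exists (r' * r), m; split=> //.
have pz : p z = r *: p x by rewrite ez linearD linearZ p0 // add0r.
by rewrite -scalerA -pz p_id.
Qed.

Lemma injective_envelope_in :
  exists (S : set E) (HS : submodule S), essential_over S /\ injective_module (subm HS).
Proof.
have ess_iota : essential_over (range iota).
  split; [exact: range_submodule | by move=> m; exists m |].
  by move=> _ [m _ <-] m_neq0; exists 1, m; rewrite scale1r.
have [S [ess_S _] Smax] := zorn_above essential_over_chain ess_iota.
have [HS _ _] := ess_S.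
pose disjoint C := submodule C /\ forall z, C z -> S z -> z = 0.
have disjoint0 : disjoint [set 0].
  split=> [|z -> //]; split=> //; split=> [_ _ -> ->|r _ ->]; by rewrite ?addr0 ?scaler0.
have disjoint_chain F : F `<=` disjoint -> total_on F subset -> F !=set0 ->
    disjoint (\bigcup_(X in F) X).
  move=> Fdisj Ftot [X0 FX0]; split.
    by apply: bigcup_submodule => // [|X /Fdisj[]]; first by exists X0.
  by move=> z [X FX Xz]; case: (Fdisj X FX) => _; apply.
have [C [[HC SC0] _] Cmax] := zorn_above disjoint_chain disjoint0.
have [p [p_id p0]] := disjoint_projection HS HC (fun z Sz Cz => SC0 z Cz Sz).
have ess_p : essential_over (range p).
  apply: essential_over_range_projection ess_S HC _ p_id p0.
  by move=> D HD DS0 CD; apply: Cmax.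
have pS x : S (p x).
  by rewrite -(Smax _ ess_p) => [|s Ss]; [exists x | exists s => //; rewrite p_id].
by exists S, HS; split=> //; apply: retract_injective pS p_id.
Qed.

End InjectiveEnvelope.

Lemma cyclic_submodule (R : comPzRingType) (E : lmodType R) (z : E) :
  submodule (fun y => exists r, y = r *: z).
Proof.
split; first by exists 0; rewrite scale0r.
split=> [_ _ [r ->] [r' ->]|a _ [r ->]]; first by exists (r + r'); rewrite scalerDl.
by exists (a * r); rewrite scalerA.
Qed.

Lemma injective_envelope (R : comPzRingType) (M : lmodType R) :
  exists (E : lmodType R) (i : {linear M -> E}),
    [/\ injective i, injective_module E & essential i].
Proof.
have [iota iota_inj] := cogen_embedding M.
have [S [HS [[_ Siota Sess] S_inj]]] := injective_envelope_in (@cogen_injective R M) iota.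
have i_linear a x y : subm_of HS (Siota (a *: x + y)) =
    a *: subm_of HS (Siota x) + subm_of HS (Siota y).
  by apply: val_inj; rewrite /= linearP.
exists (subm HS), (lin_of i_linear); split=> // [x y /(congr1 val)/iota_inj //|].
move=> T [T0 [TD TZ]] [y [Ty y_neq0]].
have [|r [m [e m_neq0]]] := Sess (val y) (subm_valP y).
  by apply: contra_notN y_neq0 => /eqP y0; apply: val_inj.
exists m; split; last by move/(congr1 val) => /= im0; rewrite im0 eqxx in m_neq0.
have -> : lin_of i_linear m = r *: y by apply: val_inj; rewrite /= -e.
exact: TZ.
Qed.

(** * GV-ideals and w-modules *)

Section GVIdeals.
Variable R : comPzRingType.
Implicit Types (ds : seq R) (N : lmodType R).

Lemma in_ideal0 ds : in_ideal ds 0.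
Proof. by exists (fun=> 0); rewrite big1 // => i _; rewrite mul0r. Qed.

Lemma in_idealD ds x y : in_ideal ds x -> in_ideal ds y -> in_ideal ds (x + y).
Proof.
move=> [c ->] [c' ->]; exists (fun i => c i + c' i).
by rewrite -big_split; apply: eq_bigr => i _; rewrite mulrDl.
Qed.

Lemma in_idealMl ds a x : in_ideal ds x -> in_ideal ds (a * x).
Proof.
move=> [c ->]; exists (fun i => a * c i).
by rewrite mulr_sumr; apply: eq_bigr => i _; rewrite mulrA.
Qed.

Lemma in_ideal_mem ds d : d \in ds -> in_ideal ds d.
Proof.
move=> d_ds; have d_lt : (index d ds < size ds)%N by rewrite index_mem.
exists (fun i => (val i == index d ds)%:R).
rewrite (bigD1 (Ordinal d_lt)) //= eqxx mul1r nth_index // big1 ?addr0 // => i.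
by rewrite -val_eqE => /negbTE ->; rewrite mul0r.
Qed.

Lemma in_ideal_ann ds r : (forall d, d \in ds -> r * d = 0) ->
  forall x, in_ideal ds x -> r * x = 0.
Proof.
move=> r_ds x [c ->]; rewrite mulr_sumr big1 // => i _.
by rewrite mulrCA r_ds ?mulr0 // mem_nth.
Qed.

Lemma ideal_submodule ds : submodule (in_ideal ds : set R^o).
Proof.
split; first exact: in_ideal0.
by split=> [|a x]; [apply: in_idealD | apply: in_idealMl].
Qed.

Lemma ideal_quot_cyclic ds : is_R_mod_ideal ds (quotm (ideal_submodule ds)).
Proof.
pose pi := quotm_pi (ideal_submodule ds).
have piE (r : R) : pi r = r *: pi 1 by rewrite -linearZ /= [r *: _]mulr1.
exists (pi 1); split=> [z|r]; last by rewrite -piE quotm_pi_eq0.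
by have [r <-] := quotm_pi_surj z; exists r.
Qed.

Lemma GV1 : GV [:: 1 : R].
Proof.
have J1 (x : R) : in_ideal [:: 1] x by exists (fun=> x); rewrite big_ord1 mulr1.
split=> [r /(_ 1 (J1 1))|phi phi_linear]; first by rewrite mulr1.
have phi0 : phi 0 = 0.
  have := phi_linear 1 0 0 (J1 0) (J1 0); rewrite !mul1r addr0 => phi00.
  by apply: (addrI (phi 0)); rewrite addr0 -phi00.
exists (phi 1) => x _; have := phi_linear x 1 0 (J1 1) (J1 0).
by rewrite mulr1 addr0 phi0 addr0 mulrC.
Qed.

Lemma torGV0 N : torGV (0 : N).
Proof. by exists [:: 1]; split=> [|d _]; [apply: GV1 | rewrite scaler0]. Qed.

Lemma essential_GV_torsionfree (M E : lmodType R) (i : {linear M -> E}) :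
  injective i -> essential i -> GV_torsionfree M -> GV_torsionfree E.
Proof.
move=> i_inj i_ess M_tf z [ds [gv Jz]]; apply: contrapT => z_neq0.
have [|x [[r ix] ix_neq0]] := i_ess _ (cyclic_submodule z).
  by exists z; split=> //; exists 1; rewrite scale1r.
apply: ix_neq0; suff -> : x = 0 by rewrite linear0.
apply: M_tf; exists ds; split=> // d Jd; apply: i_inj.
by rewrite linearZ linear0 /= ix scalerA mulrC -scalerA Jz // scaler0.
Qed.

End GVIdeals.

Notation ideal_quot ds := (quotm (ideal_submodule ds)).

Section IdealInjective.
Variables (R : comPzRingType) (ds : seq R) (N : lmodType R).

Definition ideal_linear (phi : R -> N) := forall a x y, in_ideal ds x -> in_ideal ds y ->
  phi (a * x + y) = a *: phi x + phi y.

Definition ideal_injective := forall phi, ideal_linear phi ->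
  exists u : N, forall d, in_ideal ds d -> phi d = d *: u.

Lemma ideal_injective_ann (E : lmodType R) (f : {linear N -> E}) (x : E) :
    ideal_injective -> injective f ->
    (forall d, in_ideal ds d -> exists n, f n = d *: x) ->
  exists u, forall d, in_ideal ds d -> d *: (x - f u) = 0.
Proof.
move=> N_inj f_inj Jx.
have lift d : exists n, in_ideal ds d -> f n = d *: x.
  by have [/Jx[n fn]|] := pselect (in_ideal ds d); [exists n | exists 0].
have [phi phiP] := choice lift.
have phi_linear : ideal_linear phi.
  move=> a y y' Jy Jy'; apply: f_inj; rewrite linearP !phiP ?scalerDl ?scalerA //.
  by apply: in_idealD => //; apply: in_idealMl.
have [u phi_u] := N_inj phi phi_linear.
by exists u => d Jd; rewrite scalerBr -linearZ -phi_u // phiP // subrr.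
Qed.

Lemma Ext1_zero_of_ideal_injective (C : lmodType R) :
  ideal_injective -> is_R_mod_ideal ds C -> Ext1_zero C N.
Proof.
move=> N_inj [c [c_gen c_ann]] E f g [f_inj [g_surj g_ker]].
have [x0 gx0] := g_surj c.
have [u Jx1] : exists u, forall d, in_ideal ds d -> d *: (x0 - f u) = 0.
  apply: ideal_injective_ann => // d Jd; apply/g_ker.
  by rewrite linearZ gx0; apply/c_ann.
set x1 := x0 - f u.
have [rep repP] := choice c_gen.
(* [x1] is killed by [J], so [r c |-> r x1] is well defined on [C = R/J] *)
have rep_eq y r : y = r *: c -> rep y *: x1 = r *: x1.
  move=> yrc; apply/eqP; rewrite -subr_eq0 -scalerBl Jx1 //.
  by apply/c_ann; rewrite scalerBl -repP -yrc subrr.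
have h_linear a y y' : rep (a *: y + y') *: x1 = a *: (rep y *: x1) + rep y' *: x1.
  by rewrite (rep_eq _ (a * rep y + rep y')) ?scalerDl -?scalerA -?repP.
exists (lin_of h_linear) => y /=.
by rewrite linearZ linearB /= gx0 (proj2 (g_ker _) (ex_intro _ u erefl)) subr0 -repP.
Qed.

Section Pushout.
Variables (phi : R -> N) (phi_linear : ideal_linear phi).

Let phi0 : phi 0 = 0.
Proof.
have := phi_linear 1 (in_ideal0 ds) (in_ideal0 ds); rewrite !mul1r addr0 scale1r.
by move=> phi00; apply: (addrI (phi 0)); rewrite addr0 -phi00.
Qed.

Let phiMl a x : in_ideal ds x -> phi (a * x) = a *: phi x.
Proof. by move=> Jx; rewrite -[a * x]addr0 phi_linear ?phi0 ?addr0 //; apply: in_ideal0. Qed.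

(* The pushout of [J -> R] along [phi]: the quotient of [N x R] by the graph of [-phi]. *)
Definition pushout_rel (v : N * R^o) := in_ideal ds v.2 /\ v.1 = - phi v.2.

Lemma pushout_rel_submodule : submodule pushout_rel.
Proof.
split; first by split; [apply: in_ideal0 | rewrite phi0 oppr0].
split=> [[n r] [n' r'] [Jr /= ->] [Jr' /= ->]|a [n r] [Jr /= ->]]; split=> /=.
- exact: in_idealD.
- by rewrite -[X in phi (X + _)]mul1r phi_linear // scale1r opprD.
- exact: in_idealMl.
- by rewrite phiMl // scalerN.
Qed.

Local Notation pushout := (quotm pushout_rel_submodule).

Lemma pushout_in_linear a n n' : quotm_pi pushout_rel_submodule (a *: n + n', 0) =
  a *: quotm_pi pushout_rel_submodule (n, 0) + quotm_pi pushout_rel_submodule (n', 0).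
Proof.
rewrite -linearP; congr (quotm_pi _ _).
by apply: injective_projections => //=; rewrite scaler0 addr0.
Qed.

Definition pushout_in : {linear N -> pushout} := lin_of pushout_in_linear.

Lemma pushout_inE n : pushout_in n = quotm_pi _ (n, 0).
Proof. by []. Qed.

Lemma pushout_rel_snd v : pushout_rel v -> (quotm_pi (ideal_submodule ds) \o snd) v = 0.
Proof. by case=> Jv _; apply/quotm_pi_eq0. Qed.

Definition pushout_out : {linear pushout -> ideal_quot ds} :=
  quotm_lift pushout_rel_submodule pushout_rel_snd.

Lemma pushout_outE v :
  pushout_out (quotm_pi _ v) = quotm_pi (ideal_submodule ds) v.2.
Proof. exact: quotm_liftE. Qed.

Lemma pushout_ses : ses pushout_in pushout_out.
Proof.
split; [|split].
- move=> n n' /quotm_piP[_ /=]; rewrite subrr phi0 oppr0 => /eqP.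
  by rewrite subr_eq0 => /eqP.
- move=> z; have [r <-] := quotm_pi_surj z.
  by exists (quotm_pi _ (0, r)); rewrite pushout_outE.
move=> b; have [[n r] <-] := quotm_pi_surj b; split=> [|[n' <-]]; last first.
  by rewrite pushout_inE pushout_outE; apply/quotm_pi_eq0/in_ideal0.
rewrite pushout_outE => /quotm_pi_eq0 /= Jr; exists (n + phi r).
apply/quotm_piP; split=> /=; first by rewrite sub0r -mulN1r; apply: in_idealMl.
by rewrite sub0r -mulN1r phiMl // scaleN1r opprK addrAC subrr add0r.
Qed.

(* If [h] sends the class of [1] to that of [(n0, r0)], then [r0 - 1] is in [J]; for [d]
   in [J], [h] kills the class of [d], which reads [phi d = d (- n0 - phi (r0 - 1))]. *)
Lemma pushout_section (h : {linear ideal_quot ds -> pushout}) :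
  (forall z, pushout_out (h z) = z) -> exists u, forall d, in_ideal ds d -> phi d = d *: u.
Proof.
move=> hK; pose pi := quotm_pi (ideal_submodule ds).
have [[n0 r0] hv0] := quotm_pi_surj (h (pi 1)).
have Je : in_ideal ds (r0 - 1).
  apply/(quotm_piP (ideal_submodule ds)).
  by have := hK (pi 1); rewrite -hv0 pushout_outE.
exists (- n0 - phi (r0 - 1)) => d Jd.
have : h (d *: pi 1) = 0.
  have -> : d *: pi 1 = 0 by rewrite -linearZ /= [d *: _]mulr1; apply/quotm_pi_eq0.
  exact: linear0.
rewrite linearZ -hv0 -linearZ => /quotm_pi_eq0[_ /= dn0].
have phi_dr0 : phi (d * r0) = d *: phi (r0 - 1) + phi d.
  by rewrite -[X in d * X](subrK 1) mulrDr mulr1 phi_linear.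
by rewrite scalerBr scalerN dn0 opprK -[d *: r0]/(d * r0) phi_dr0 addrC addKr.
Qed.

End Pushout.

Lemma ideal_injective_of_Ext1_zero : Ext1_zero (ideal_quot ds) N -> ideal_injective.
Proof.
move=> ext phi phi_linear.
have [h hK] := ext _ _ _ (pushout_ses phi_linear).
exact: pushout_section hK.
Qed.

End IdealInjective.

Section WModules.
Variable R : comPzRingType.

Lemma w_module_ideal_injective (N : lmodType R) ds :
  w_module N -> GV ds -> ideal_injective ds N.
Proof.
by move=> [_ N_ext] gv; apply/ideal_injective_of_Ext1_zero/N_ext/ideal_quot_cyclic.
Qed.

Lemma ideal_injective_w_module (N : lmodType R) : GV_torsionfree N ->
  (forall ds, GV ds -> ideal_injective ds N) -> w_module N.
Proof.
move=> N_tf N_inj; split=> // ds gv C.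
exact: Ext1_zero_of_ideal_injective (N_inj ds gv).
Qed.

Lemma w_module_GV_closed (M E : lmodType R) (i : {linear M -> E}) ds (y : E) :
    w_module M -> injective i -> GV_torsionfree E -> GV ds ->
    (forall d, in_ideal ds d -> exists x, i x = d *: y) ->
  exists z, i z = y.
Proof.
move=> wM i_inj E_tf gv Jy.
have [u Ju] := ideal_injective_ann (w_module_ideal_injective wM gv) i_inj Jy.
by exists u; apply/eqP; rewrite eq_sym -subr_eq0; apply/eqP/E_tf; exists ds.
Qed.

Lemma w_module_is_L (M : lmodType R) : w_module M -> is_L M M.
Proof.
move=> wM; have [M_tf _] := wM.
have [E [i [i_inj E_inj i_ess]]] := injective_envelope M.
have E_tf := essential_GV_torsionfree i_inj i_ess M_tf.
exists M, E, idfun, i, i; split; first by move=> z; exists z.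
split; first by move=> x; split=> [/= ->|/M_tf //]; apply: torGV0.
do 4!split=> //; move=> y; split=> [[z <-]|[ds [gv Jy]]].
  by exists [:: 1]; split=> [|d _]; [apply: GV1 | exists (d *: z); rewrite linearZ].
exact: w_module_GV_closed wM i_inj E_tf gv Jy.
Qed.

End WModules.

(** * The free cover and its syzygy *)

Section FreeCover.
Variables (R : comPzRingType) (M : lmodType R).

(* [monalg] equips [{malg R[M]}] with its [R]-action only for nontrivial rings [R]. *)
Definition free := {malg R[M]}.
HB.instance Definition _ := GRing.Zmodule.on free.
Local Notation F := free.

Definition free_scale (a : R) (g : F) : F := [malg k in msupp g => a * g@_k].

Lemma mcoeff_free_scale a g k : (free_scale a g)@_k = a * g@_k.
Proof. by rewrite mcoeffE; case: ifP => // /negbT/mcoeff_outdom ->; rewrite mulr0. Qed.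

Lemma free_scaleA a b g : free_scale a (free_scale b g) = free_scale (a * b) g.
Proof. by apply/malgP => k; rewrite !mcoeff_free_scale mulrA. Qed.
Lemma free_scale1 : left_id 1 free_scale.
Proof. by move=> g; apply/malgP => k; rewrite mcoeff_free_scale mul1r. Qed.
Lemma free_scaleDr : right_distributive free_scale +%R.
Proof.
by move=> a g g'; apply/malgP => k; rewrite mcoeffD !mcoeff_free_scale mcoeffD mulrDr.
Qed.
Lemma free_scaleDl g : {morph free_scale^~ g : a b / a + b}.
Proof. by move=> a b; apply/malgP => k; rewrite mcoeffD !mcoeff_free_scale mulrDl. Qed.

HB.instance Definition _ := GRing.Zmodule_isLmodule.Build R F
  free_scaleA free_scale1 free_scaleDr free_scaleDl.

Lemma free_mcoeffZ (a : R) (g : F) k : (a *: g)@_k = a * g@_k.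
Proof. exact: mcoeff_free_scale. Qed.

Definition malg_sum (V : lmodType R) (v : M -> V) (g : F) : V :=
  \sum_(k <- msupp g) g@_k *: v k.

Lemma malg_sumEw (V : lmodType R) (v : M -> V) g (D : {fset M}) :
  (msupp g `<=` D)%fset -> malg_sum v g = \sum_(k <- D) g@_k *: v k.
Proof.
move=> gD; apply: big_fset_incl => // k _ k_g.
by rewrite mcoeff_outdom ?scale0r.
Qed.

Lemma malg_sum_linear (V : lmodType R) (v : M -> V) (a : R) (g g' : F) :
  malg_sum v (a *: g + g') = a *: malg_sum v g + malg_sum v g'.
Proof.
pose D := (msupp g `|` msupp g')%fset.
rewrite !(@malg_sumEw _ _ _ D) ?fsubsetUl ?fsubsetUr //; last first.
  apply/fsubsetP => k; rewrite in_fsetU -!mcoeff_neq0 mcoeffD free_mcoeffZ.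
  apply: contraTT; rewrite negb_or !negbK => /andP[/eqP -> /eqP ->].
  by rewrite mulr0 addr0.
rewrite scaler_sumr -big_split; apply: eq_bigr => k _.
by rewrite mcoeffD free_mcoeffZ scalerDl scalerA.
Qed.

Definition free_lift (V : lmodType R) (v : M -> V) : {linear F -> V} :=
  lin_of (malg_sum_linear v).

Lemma malg_sumU (V : lmodType R) (v : M -> V) m : malg_sum v << m >> = v m.
Proof. by rewrite (malg_sumEw _ msuppU_le) big_seq_fset1 mcoeffUU scale1r. Qed.

Lemma malg_sum_basis (g : F) : malg_sum (fun k => << k >> : F) g = g.
Proof.
rewrite [RHS]monalgE; apply: eq_bigr => k _.
by apply/malgP => k'; rewrite free_mcoeffZ !mcoeffU mulr_natr.
Qed.

Lemma free_projective : projective_module F.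
Proof.
move=> B C g f g_surj; have [b bP] := choice (fun m => g_surj (f << m >>)).
exists (free_lift b) => x; rewrite -[in RHS](malg_sum_basis x) /= /malg_sum.
by rewrite !linear_sum; apply: eq_bigr => k _; rewrite !linearZ bP.
Qed.

Definition free_cover : {linear F -> M} := free_lift id.

Lemma free_cover_surj m : exists g, free_cover g = m.
Proof. by exists << m >>; apply: malg_sumU. Qed.

Lemma free_ideal_injective ds : GV ds -> ideal_injective ds F.
Proof.
move=> [GV_inj GV_surj] phi phi_linear.
have coord k : exists r, forall d, in_ideal ds d -> (phi d)@_k = r * d.
  by apply: GV_surj => a x y Jx Jy; rewrite phi_linear // mcoeffD free_mcoeffZ.
have [r rP] := choice coord.
pose D := (\bigcup_(d <- ds) msupp (phi d))%fset.
have r_supp k : k \notin D -> r k = 0.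
  move=> kD; apply: GV_inj; apply: in_ideal_ann => d d_ds.
  rewrite -rP; last exact: in_ideal_mem.
  apply: mcoeff_outdom; apply: contra kD => k_d.
  by apply/bigfcupP; exists d; rewrite ?d_ds.
exists [malg k in D => r k] => d Jd; apply/malgP => k.
by rewrite free_mcoeffZ mcoeffE rP // mulrC; case: ifP => // /negbT/r_supp ->.
Qed.

Let K := subm (kernel_submodule free_cover).

Lemma syzygy_torsionfree : torsionfree K.
Proof.
move=> r x r_reg rx0; apply: val_inj; apply/malgP => k; rewrite mcoeff0.
by apply: r_reg; have := congr1 (fun z : K => (val z)@_k) rx0; rewrite /= free_mcoeffZ mcoeff0.
Qed.

Lemma syzygy_w_module : GV_torsionfree M -> w_module K.
Proof.
move=> M_tf; apply: ideal_injective_w_module => [z [ds [[GV_inj _] Jz]]|ds gv phi phi_lin].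
  apply: val_inj; apply/malgP => k; rewrite mcoeff0; apply: GV_inj => d Jd.
  by have := congr1 (fun z : K => (val z)@_k) (Jz d Jd); rewrite /= free_mcoeffZ mcoeff0 mulrC.
have val_phi_lin : ideal_linear ds (val \o phi).
  by move=> a x y Jx Jy; rewrite /= phi_lin // linearP.
have [u phi_u] := free_ideal_injective gv val_phi_lin.
have uK : free_cover u = 0.
  apply: M_tf; exists ds; split=> // d Jd; rewrite -linearZ -phi_u //.
  exact: (subm_valP (phi d)).
exists (subm_of (kernel_submodule free_cover) uK) => d Jd; apply: val_inj.
by rewrite -[LHS]/((val \o phi) d) phi_u.
Qed.

End FreeCover.

Notation syzygy M := (subm (kernel_submodule (@free_cover _ M))).

Theorem proposition2p8 (R : comPzRingType) (M : lmodType R) :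
  w_module M -> w_projective M -> w_split M.
Proof.
move=> wM M_wproj; have [M_tf _] := wM.
have ses_syzygy : ses (val : {linear syzygy M -> free M}) (free_cover M).
  split; [exact: val_inj | split; first exact: free_cover_surj].
  move=> g; split=> [g0|[k <-]]; last exact: (subm_valP k).
  by exists (subm_of (kernel_submodule _) g0).
have [ds [gv lift]] := M_wproj M (w_module_is_L wM) _
  (@syzygy_torsionfree _ M) (syzygy_w_module M_tf) _ _ _ ses_syzygy.
exists (syzygy M), (free M), val, (free_cover M); split; first exact: free_projective.
by split=> //; exists ds; split=> // d /in_ideal_mem/lift.
Qed.
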